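(* Let $r\in[0,1]^A$ be a reward vector, $\tau>0$, $\pi^*$ the deterministic policy putting all mass on an optimal action $a^*\in\arg\max_ar(a)$, and $\pi^*_\tau=\mathrm{softmax}(r/\tau)$, i.e. $\pi^*_\tau(a)=e^{r(a)/\tau}/\sum_{a'}e^{r(a')/\tau}$. Then $$(\pi^*-\pi^*_\tau)^\top r\le\tau\,W\Big(\frac{A-1}{e}\Big),$$ where $W:[0,\infty)\to[0,\infty)$ is the principal branch of the Lambert $W$ function, defined by $W(x)e^{W(x)}=x$. *)

From HB Require Import structures.
From mathcomp Require Import all_boot all_order all_algebra.
From mathcomp Require Import all_classical all_reals all_analysis.
Set Implicit Arguments. Unset Strict Implicit. Unset Printing Implicit Defensive.
Import Order.TTheory GRing.Theory Num.Theory.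
Local Open Scope ring_scope.
Local Open Scope classical_set_scope.

Definition LambertW (R : realType) (x : R) : R :=
  xget 0 [set w : R | 0 <= w /\ w * expR w = x].

Definition softmax (R : realType) (n : nat) (tau : R) (r : 'I_n -> R) (a : 'I_n) : R :=
  expR (r a / tau) / \sum_(a' < n) expR (r a' / tau).

Definition dirac_policy (R : realType) (n : nat) (astar : 'I_n) (a : 'I_n) : R :=
  (a == astar)%:R.

(** The softmax regret is a weighted average of the gaps [s a = r astar - r a]
    with weights proportional to [exp (- s a / tau)], so it is at most [tau w]
    as soon as [sum_a exp (- s a / tau) (s a - tau w) <= 0].  The term of
    [astar] contributes [- tau w]; each of the other [n - 1] terms is at most
    [tau exp (- (w + 1))] because [x exp (- x) <= 1 / e].  The choice
    [w = W ((n - 1) / e)] makes these contributions cancel exactly. *)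

From HB Require Import structures.
From mathcomp Require Import all_boot all_order all_algebra.
From mathcomp Require Import all_classical all_reals all_analysis.
From mathcomp Require Import ring.
Set Implicit Arguments. Unset Strict Implicit. Unset Printing Implicit Defensive.
Import Order.TTheory GRing.Theory Num.Theory numFieldTopology.Exports.
Local Open Scope ring_scope.

Lemma LambertW_mul_expR (R : realType) (c : R) : 0 <= c ->
  LambertW c * expR (LambertW c) = c.
Proof.
move=> c_ge0.
have cont x : {for x, continuous (fun w : R => w * expR w)}.
  by apply: continuousM; [exact: cvg_id | exact: continuous_expR].
have c_le : c <= c * expR c by rewrite -{1}[c]mulr1 ler_wpM2l // -expR0 ler_expR.
have [|w] := @IVT R (fun w => w * expR w) 0 c c c_ge0 (continuous_subspaceT cont).
  by rewrite mul0r ge_min c_ge0 le_max c_le orbT.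
rewrite in_itv /= => /andP[w_ge0 _] wE.
have [] : 0 <= LambertW c /\ LambertW c * expR (LambertW c) = c.
  by apply: (@xgetPex _ 0 [set w : R | 0 <= w /\ w * expR w = c]); exists w.
by [].
Qed.

Lemma mulr_expRN_le (R : realType) (x : R) : x * expR (- x) <= expR (-1).
Proof.
have x_le : x <= expR (x - 1) by have := expR_ge1Dx (x - 1); rewrite addrC subrK.
have -> : expR (-1) = expR (x - 1) * expR (- x) by rewrite -expRD; congr expR; ring.
by rewrite ler_wpM2r ?expR_ge0.
Qed.

Lemma expRN_gap_le (R : realType) (tau w s : R) : 0 < tau ->
  expR (- (s / tau)) * (s - tau * w) <= tau * expR (- (w + 1)).
Proof.
move=> tau_gt0; set x := s / tau - w.
have -> : s - tau * w = tau * x by rewrite /x mulrBr mulrCA divff ?gt_eqF ?mulr1.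
have -> : - (s / tau) = - w + - x by rewrite /x; ring.
clearbody x; rewrite expRD opprD expRD.
have -> : expR (- w) * expR (- x) * (tau * x)
    = tau * expR (- w) * (x * expR (- x)) by ring.
have -> : tau * (expR (- w) * expR (-1)) = tau * expR (- w) * expR (-1) by ring.
by apply: ler_wpM2l; [rewrite mulr_ge0 ?expR_ge0 ?ltW | exact: mulr_expRN_le].
Qed.

Lemma sum_expRN_gap_le0 (R : realType) (n : nat) (tau w : R) (s : 'I_n -> R)
    (astar : 'I_n) :
  0 < tau -> s astar = 0 -> n.-1%:R * expR (- (w + 1)) = w ->
  \sum_(a < n) expR (- (s a / tau)) * (s a - tau * w) <= 0.
Proof.
move=> tau_gt0 s_astar wE; rewrite (bigD1 astar) //= s_astar mul0r oppr0 expR0.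
have others : \sum_(a < n | a != astar) expR (- (s a / tau)) * (s a - tau * w)
    <= \sum_(a < n | a != astar) tau * expR (- (w + 1)).
  by apply: ler_sum => a _; exact: expRN_gap_le.
rewrite sumr_const cardC1 card_ord -mulr_natl mulrCA wE in others.
by rewrite mul1r sub0r addrC subr_le0.
Qed.

Lemma sumr_expR_gt0 (R : realType) (n : nat) (f : 'I_n -> R) (a0 : 'I_n) :
  0 < \sum_(a < n) expR (f a).
Proof.
rewrite (bigD1 a0) //= ltr_pwDl ?expR_gt0 //.
by rewrite sumr_ge0 // => a _; exact: expR_ge0.
Qed.

Lemma softmax_sum1 (R : realType) (n : nat) (tau : R) (r : 'I_n -> R) (a0 : 'I_n) :
  \sum_(a < n) softmax tau r a = 1.
Proof. by rewrite -mulr_suml divff // gt_eqF // (sumr_expR_gt0 _ a0). Qed.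

Lemma sum_dirac_policyB (R : realType) (n : nat) (astar : 'I_n) (p r : 'I_n -> R) :
  \sum_(a < n) p a = 1 ->
  \sum_(a < n) (dirac_policy R astar a - p a) * r a
    = \sum_(a < n) p a * (r astar - r a).
Proof.
move=> p_sum1; under eq_bigr do rewrite mulrBl.
under [RHS]eq_bigr do rewrite mulrBr.
rewrite !sumrB -mulr_suml p_sum1 mul1r; congr (_ - _).
rewrite (bigD1 astar) //= big1 ?addr0 /dirac_policy ?eqxx ?mul1r //.
by move=> a /negPf ->; rewrite mul0r.
Qed.

Lemma softmax_regret_le (R : realType) (n : nat) (tau w : R) (r : 'I_n -> R)
    (astar : 'I_n) :
  0 < tau -> w * expR w = (n%:R - 1) / expR 1 ->
  \sum_(a < n) softmax tau r a * (r astar - r a) <= tau * w.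
Proof.
move=> tau_gt0 wE; set s := fun a => r astar - r a.
have n_gt0 : (0 < n)%N by apply: leq_ltn_trans (ltn_ord astar).
have wE' : n.-1%:R * expR (- (w + 1)) = w.
  rewrite -subn1 natrB // -[_ - 1](divfK (lt0r_neq0 (expR_gt0 1))) -wE.
  by rewrite -!mulrA -!expRD (_ : _ + _ = 0) ?expR0 ?mulr1 //; ring.
set Z := \sum_(a < n) expR (r a / tau).
have Z_gt0 : 0 < Z := sumr_expR_gt0 _ astar.
set C := expR (r astar / tau) / Z.
have C_ge0 : 0 <= C by rewrite divr_ge0 ?expR_ge0 ?ltW.
have softmaxE a : softmax tau r a = C * expR (- (s a / tau)).
  by rewrite /softmax /C mulrAC -expRD /s; congr (expR _ / _); field; rewrite gt_eqF.
rewrite -subr_le0 -[tau * w]mul1r -(softmax_sum1 tau r astar) mulr_suml -sumrB.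
under eq_bigr do rewrite -mulrBr softmaxE -mulrA.
rewrite -mulr_sumr mulr_ge0_le0 //.
by apply: (sum_expRN_gap_le0 (s := s) (astar := astar)); rewrite /s ?subrr.
Qed.

Theorem lemma14 (R : realType) (n : nat) (r : 'I_n -> R) (tau : R)
  (astar : 'I_n)
  (hr : forall a, 0 <= r a <= 1)
  (htau : 0 < tau)
  (hopt : forall a, r a <= r astar) :
  \sum_(a < n) (dirac_policy R astar a - softmax tau r a) * r a
    <= tau * LambertW ((n%:R - 1) / expR 1).
Proof.
have n_ge1 : 1 <= n%:R :> R by rewrite ler1n (leq_ltn_trans _ (ltn_ord astar)).
have c_ge0 : 0 <= (n%:R - 1) / expR 1 :> R by rewrite divr_ge0 ?expR_ge0 ?subr_ge0.
have WE := LambertW_mul_expR c_ge0.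
rewrite (sum_dirac_policyB _ _ (softmax_sum1 tau r astar)).
exact: softmax_regret_le.
Qed.
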